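(* It holds that \[ \mathscr{A}(\mathbb{R}^3\otimes\mathbb{R}^3\otimes\mathbb{R}^3)=\mathscr{A}(\mathrm{Sym}^3(\mathbb{R}^3))=\frac{1}{\sqrt{\max_{A\in\mathbb{R}^3\otimes\mathbb{R}^3\otimes\mathbb{R}^3}\operatorname{rk}_\perp(A)}}=\frac{1}{\sqrt7}. \] Moreover, the symmetric tensor associated with the Chebyshev cubic $\mathrm{Ch}_{3,3}(x)=x_1^3-3x_1(x_2^2+x_3^2)$ is extremal, both in $\mathbb{R}^3\otimes\mathbb{R}^3\otimes\mathbb{R}^3$ and in $\mathrm{Sym}^3(\mathbb{R}^3)$.
   Context: Tensors and their norms: \begin{itemize} \item The Frobenius inner product on real $(n_1,\dots,n_d)$-tensors is $\langle A,A'\rangle_F=\sum a_{i_1\dots i_d}a'_{i_1\dots i_d}$, with norm $\|A\|_F$. \item A rank-one tensor is a nonzero $x^{(1)}\otimes\cdots\otimes x^{(d)}$. \item The spectral norm is $\|A\|_2=\max_{\|x^{(j)}\|=1}\langle A,x^{(1)}\otimes\cdots\otimes x^{(d)}\rangle_F$. \end{itemize} Best rank-one approximation ratio: \begin{itemize} \item For a linear subspace $V$ of the tensor space (either the full tensor space or the space $\mathrm{Sym}^d(\mathbb{R}^n)$ of symmetric $n^d$-tensors), $\mathscr{A}(V)=\min_{0\neq A\in V}\|A\|_2/\|A\|_F$. \item A nonzero $A\in V$ is called extremal (in $V$) if $\|A\|_2/\|A\|_F=\mathscr{A}(V)$. \end{itemize} Orthogonal rank: $\operatorname{rk}_\perp(A)$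 is the smallest $r$ with $A=Y_1+\dots+Y_r$, where the $Y_\ell$ are rank-one tensors that are pairwise orthogonal in $\langle\cdot,\cdot\rangle_F$. The symmetric tensor $A$ associated with a form $p\in P_{d,n}$ is the unique symmetric tensor with $p(x)=\langle A,x\otimes\cdots\otimes x\rangle_F$. *)

From Stdlib Require Import Reals List ClassicalEpsilon.
Open Scope R_scope.

(* Index set {1,2,3} of R^3 (I0,I1,I2 correspond to coordinates 1,2,3). *)
Inductive idx3 : Type := I0 | I1 | I2.

Definition sum3 (f : idx3 -> R) : R := f I0 + f I1 + f I2.

Definition vec3 := idx3 -> R.
Definition tensor := idx3 -> idx3 -> idx3 -> R.

Definition tzero : tensor := fun _ _ _ => 0.
Definition tadd (A B : tensor) : tensor := fun i j k => A i j k + B i j k.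

Definition vnorm (x : vec3) : R := sqrt (sum3 (fun i => x i * x i)).

Definition frob_inner (A B : tensor) : R :=
  sum3 (fun i => sum3 (fun j => sum3 (fun k => A i j k * B i j k))).
Definition frob_norm (A : tensor) : R := sqrt (frob_inner A A).

Definition outer (x y z : vec3) : tensor := fun i j k => x i * y j * z k.

Definition rank_one (T : tensor) : Prop :=
  T <> tzero /\ exists x y z : vec3, T = outer x y z.

Definition is_glb (E : R -> Prop) (m : R) : Prop :=
  (forall y, E y -> m <= y) /\ (forall b, (forall y, E y -> b <= y) -> b <= m).

(* Spectral norm: max over unit x,y,z of <A, x (x) y (x) z>_F
   (defined as the supremum, which is attained). *)
Definition spec_values (A : tensor) : R -> Prop :=
  fun v => exists x y z : vec3,
    vnorm x = 1 /\ vnorm y = 1 /\ vnorm z = 1 /\ v = frob_inner A (outer x y z).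
Definition spec_norm (A : tensor) : R :=
  epsilon (inhabits 0) (fun s => is_lub (spec_values A) s).

Definition full_space : tensor -> Prop := fun _ => True.
Definition symmetric (A : tensor) : Prop :=
  forall i j k, A i j k = A j i k /\ A i j k = A i k j /\ A i j k = A k j i.
Definition sym_space : tensor -> Prop := symmetric.

(* Best rank-one approximation ratio A(V) = min_{0<>A in V} ||A||_2/||A||_F
   (defined as the infimum; extremality below asserts it is attained). *)
Definition ratio_values (V : tensor -> Prop) : R -> Prop :=
  fun r => exists A, V A /\ A <> tzero /\ r = spec_norm A / frob_norm A.
Definition brao (V : tensor -> Prop) : R :=
  epsilon (inhabits 0) (fun m => is_glb (ratio_values V) m).

Definition extremal (V : tensor -> Prop) (A : tensor) : Prop :=
  V A /\ A <> tzero /\ spec_norm A / frob_norm A = brao V.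

Definition orth_decomp (A : tensor) (r : nat) : Prop :=
  exists Ys : list tensor,
    length Ys = r /\
    Forall rank_one Ys /\
    (forall a b, (a < r)%nat -> (b < r)%nat -> a <> b ->
       frob_inner (nth a Ys tzero) (nth b Ys tzero) = 0) /\
    A = fold_right tadd tzero Ys.

Definition rk_perp (A : tensor) : nat :=
  epsilon (inhabits 0%nat)
    (fun r => orth_decomp A r /\ forall r', orth_decomp A r' -> (r <= r')%nat).

Definition max_rk_perp : nat :=
  epsilon (inhabits 0%nat)
    (fun m => (exists A, rk_perp A = m) /\ forall A, (rk_perp A <= m)%nat).

Definition cheb33 (x : vec3) : R :=
  x I0 ^ 3 - 3 * x I0 * (x I1 ^ 2 + x I2 ^ 2).

Definition assoc_sym_tensor (p : vec3 -> R) (A : tensor) : Prop :=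
  symmetric A /\ forall x : vec3, p x = frob_inner A (outer x x x).

(* Every real 3x3 matrix pencil has a
   singular member (a real binary cubic has a real zero).  Hence one finds
   orthogonal directions u1, u2 whose slices [sum_i u_i A_i..] are singular;
   with u3 = u1 x u2 the tensor is the sum of its three slices, a singular
   slice splits into two orthogonal rank-one matrices along an orthogonal
   basis containing a left-kernel vector, and the last slice into three.
   This gives [rk_perp A <= 7] for every A ([orth_decomp7]).

   If A = Y_1 + ... + Y_r orthogonally, each Y_l is
   the projection of A on itself, so [|Y_l|_F <= ||A||_2] and by Pythagoras
   [|A|_F^2 <= r ||A||_2^2] ([orth_decomp_bound]); thus
   [||A||_2 / |A|_F >= 1/sqrt 7].

   The Chebyshev tensor Ch has [|Ch|_F^2 = 7] and [||Ch||_2 = 1],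
   attaining the bound; it is symmetric, so both ratios equal 1/sqrt 7, and the
   same bound forces [rk_perp Ch = 7], the maximal orthogonal rank. *)

From Stdlib Require Import Reals Lra Psatz List ClassicalEpsilon Classical
  FunctionalExtensionality Arith Lia Wf_nat.
Import ListNotations.
Open Scope R_scope.

Definition dot (x y : vec3) : R := sum3 (fun i => x i * y i).

Definition cross (a b : vec3) : vec3 := fun i =>
  match i with
  | I0 => a I1 * b I2 - a I2 * b I1
  | I1 => a I2 * b I0 - a I0 * b I2
  | I2 => a I0 * b I1 - a I1 * b I0
  end.

Definition mk3 (a b c : R) : vec3 :=
  fun i => match i with I0 => a | I1 => b | I2 => c end.
Definition vlin (s : R) (p : vec3) (t : R) (q : vec3) : vec3 := fun i => s * p i + t * q i.
Definition vsc (c : R) (v : vec3) : vec3 := fun i => c * v i.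

Definition nz (v : vec3) : Prop := 0 < dot v v.

Definition orth_triple (a b c : vec3) : Prop :=
  nz a /\ nz b /\ nz c /\ dot a b = 0 /\ dot a c = 0 /\ dot b c = 0.

Ltac vsimpl := unfold dot, cross, vlin, vsc, mk3, sum3 in *.

Lemma dot_ge0 x : 0 <= dot x x.
Proof. vsimpl; nra. Qed.

Lemma dot_sym x y : dot x y = dot y x.
Proof. vsimpl; ring. Qed.

Lemma not_nz_zero x : ~ nz x -> forall i, x i = 0.
Proof.
  unfold nz; intros H i; pose proof (dot_ge0 x) as G.
  assert (Z : dot x x = 0) by lra; vsimpl; destruct i; nra.
Qed.

Lemma not_nz_dot x w : ~ nz x -> dot x w = 0.
Proof. intros H; pose proof (not_nz_zero x H) as Z; vsimpl; rewrite !Z; ring. Qed.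

Lemma nz_cross_sym a b : nz (cross b a) -> nz (cross a b).
Proof. unfold nz; replace (dot (cross a b) (cross a b)) with (dot (cross b a) (cross b a)) by (vsimpl; ring); auto. Qed.

Lemma complete_orth v : nz v -> exists p q, orth_triple p q v.
Proof.
  intros Hv. destruct (classic (v I0 = 0 /\ v I1 = 0)) as [[h0 h1] | h].
  - exists (mk3 1 0 0), (mk3 0 1 0). unfold orth_triple, nz in *; vsimpl.
    rewrite h0, h1 in *; repeat split; lra.
  - assert (0 < v I0 * v I0 + v I1 * v I1).
    { destruct (Req_dec (v I0) 0); [assert (v I1 <> 0) by tauto |]; nra. }
    exists (mk3 (- v I1) (v I0) 0),
      (mk3 (- v I0 * v I2) (- v I1 * v I2) (v I0 * v I0 + v I1 * v I1)).
    unfold orth_triple, nz in *; vsimpl; repeat split; nra.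
Qed.

Lemma orth_triple_cross u v : nz u -> nz v -> dot u v = 0 -> orth_triple u v (cross u v).
Proof.
  intros Hu Hv Huv. unfold orth_triple. repeat split; auto; try (vsimpl; ring).
  unfold nz in *.
  replace (dot (cross u v) (cross u v)) with (dot u u * dot v v - dot u v * dot u v) by (vsimpl; ring).
  rewrite Huv; nra.
Qed.

Definition e1 : vec3 := mk3 1 0 0.
Definition e2 : vec3 := mk3 0 1 0.
Definition e3 : vec3 := mk3 0 0 1.

Lemma std_basis : orth_triple e1 e2 e3.
Proof. unfold orth_triple, nz, e1, e2, e3; vsimpl; repeat split; lra. Qed.

Lemma cramer a b c y i :
  dot a (cross b c) * y i = dot y a * cross b c i + dot y b * cross c a i + dot y c * cross a b i.
Proof. destruct i; vsimpl; ring. Qed.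

(* The square of a determinant is the Gram determinant; for an orthogonal
   triple this is the product of the squared lengths. *)
Lemma det_sq_orth a b c : dot a b = 0 -> dot a c = 0 -> dot b c = 0 ->
  dot a (cross b c) * dot a (cross b c) = dot a a * dot b b * dot c c.
Proof.
  intros ab ac bc.
  assert (Gram : dot a (cross b c) * dot a (cross b c) =
    dot a a * dot b b * dot c c + 2 * dot a b * dot b c * dot a c
    - dot a a * dot b c * dot b c - dot b b * dot a c * dot a c - dot c c * dot a b * dot a b)
    by (vsimpl; ring).
  rewrite Gram, ab, ac, bc; ring.
Qed.

Lemma orth_basis_zero a b c y : orth_triple a b c ->
  dot y a = 0 -> dot y b = 0 -> dot y c = 0 -> forall i, y i = 0.
Proof.
  intros (Ha & Hb & Hc & ab & ac & bc) ya yb yc i.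
  pose proof (det_sq_orth a b c ab ac bc) as D. unfold nz in *.
  assert (Dnz : dot a (cross b c) <> 0).
  { intro Z; rewrite Z in D; assert (0 < dot a a * dot b b * dot c c) by
      (repeat apply Rmult_lt_0_compat; auto); lra. }
  pose proof (cramer a b c y i) as E; rewrite ya, yb, yc in E.
  apply (Rmult_eq_reg_l (dot a (cross b c))); lra.
Qed.

Definition coef (a x : vec3) : R := dot a x / dot a a.

Lemma orth_expand a b c x : orth_triple a b c ->
  forall i, x i = coef a x * a i + coef b x * b i + coef c x * c i.
Proof.
  intros T. pose proof T as (Ha & Hb & Hc & ab & ac & bc). unfold nz, coef in *.
  set (y := fun i => x i - (dot a x / dot a a * a i + dot b x / dot b b * b i
                            + dot c x / dot c c * c i)).
  assert (ya : dot y a = dot x a - dot a x / dot a a * dot a a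
     - dot b x / dot b b * dot a b - dot c x / dot c c * dot a c) by (unfold y; vsimpl; ring).
  assert (yb : dot y b = dot x b - dot a x / dot a a * dot a b
     - dot b x / dot b b * dot b b - dot c x / dot c c * dot b c) by (unfold y; vsimpl; ring).
  assert (yc : dot y c = dot x c - dot a x / dot a a * dot a c
     - dot b x / dot b b * dot b c - dot c x / dot c c * dot c c) by (unfold y; vsimpl; ring).
  rewrite ab, ac, bc, (dot_sym x a), (dot_sym x b), (dot_sym x c) in *.
  intro i. assert (Y : y i = 0).
  { apply (orth_basis_zero a b c y T).
    - rewrite ya; field; lra.
    - rewrite yb; field; lra.
    - rewrite yc; field; lra. }
  unfold y in Y; lra.
Qed.

Lemma orth_expand2 a b c x : orth_triple a b c -> dot c x = 0 ->
  forall i, x i = coef a x * a i + coef b x * b i.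
Proof.
  intros T Hx i. rewrite (orth_expand a b c x T i).
  unfold coef; rewrite Hx; unfold Rdiv; ring.
Qed.
Definition mat := idx3 -> idx3 -> R.
Definition col (M : mat) (k : idx3) : vec3 := fun j => M j k.
Definition det3 (M : mat) : R := dot (col M I0) (cross (col M I1) (col M I2)).

Lemma binary_cubic_root a b c d : exists s t, (s <> 0 \/ t <> 0) /\
  a * s^3 + b * s^2 * t + c * s * t^2 + d * t^3 = 0.
Proof.
  destruct (Req_dec a 0) as [Ha | Ha].
  { exists 1, 0; split; [left; lra | subst; ring]. }
  set (B := b / a); set (C := c / a); set (D := d / a).
  set (M := 1 + Rabs B + Rabs C + Rabs D).
  pose proof (Rle_abs B); pose proof (Rle_abs (- B)); pose proof (Rle_abs C);
  pose proof (Rle_abs (- C)); pose proof (Rle_abs D); pose proof (Rle_abs (- D)).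
  rewrite !Rabs_Ropp in *.
  assert (HM : 1 <= M) by (unfold M; pose proof (Rabs_pos B); pose proof (Rabs_pos C);
                           pose proof (Rabs_pos D); lra).
  set (f := fun s => s^3 + B * s^2 + C * s + D).
  (* [f] is a monic cubic, positive at [M] and negative at [-M]. *)
  assert (Mpos : 0 < f M).
  { unfold f; assert (M <= M * M) by nra.
    assert (B * (M * M) >= - Rabs B * (M * M)) by nra.
    assert (C * M >= - Rabs C * (M * M)) by nra.
    assert (D >= - Rabs D * (M * M)) by nra. unfold M in *; nra. }
  assert (Mneg : f (- M) < 0).
  { unfold f; assert (M <= M * M) by nra.
    assert (B * (M * M) <= Rabs B * (M * M)) by nra.
    assert (- C * M <= Rabs C * (M * M)) by nra.
    assert (D <= Rabs D * (M * M)) by nra. unfold M in *; nra. }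
  destruct (IVT f (- M) M ltac:(unfold f; reg) ltac:(lra) Mneg Mpos) as [z [_ Hz]].
  exists z, 1; split; [right; lra |].
  unfold f, B, C, D in Hz.
  replace (a * z^3 + b * z^2 * 1 + c * z * 1^2 + d * 1^3)
    with (a * (z^3 + b / a * z^2 + c / a * z + d / a)) by (field; auto).
  rewrite Hz; ring.
Qed.

Lemma singular_pencil (P Q : mat) : exists s t, (s <> 0 \/ t <> 0) /\
  det3 (fun j k => s * P j k + t * Q j k) = 0.
Proof.
  (* The determinant of the pencil is a binary cubic, whose coefficients are
     recovered from its values at (1,0), (0,1), (1,1), (1,-1). *)
  set (a := det3 P); set (d := det3 Q).
  set (p := det3 (fun j k => P j k + Q j k)); set (m := det3 (fun j k => P j k - Q j k)).
  destruct (binary_cubic_root a ((p - m) / 2 - d) ((p + m) / 2 - a) d) as [s [t [Hst H]]].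
  exists s, t; split; auto. rewrite <- H. unfold a, d, p, m, det3, col; vsimpl. field.
Qed.

(* If the cross product of [a] with [b] and with [c] vanishes, then [a], [b], [c]
   are parallel and a nonzero vector is orthogonal to all three. *)
Lemma perp_of_parallel a b c : nz a -> ~ nz (cross a b) -> ~ nz (cross a c) ->
  exists v, nz v /\ dot v a = 0 /\ dot v b = 0 /\ dot v c = 0.
Proof.
  intros Ha Hb Hc. destruct (complete_orth a Ha) as [v [w (Hv & _ & _ & _ & Hva & _)]].
  exists v.
  (* Lagrange identity *)
  assert (L : forall x, dot (cross a x) (cross a v) = dot a a * dot x v - dot a v * dot x a)
    by (intros; vsimpl; ring).
  pose proof (L b) as Lb; pose proof (L c) as Lc.
  rewrite not_nz_dot in Lb, Lc by auto. rewrite (dot_sym a v), Hva in Lb, Lc.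
  unfold nz in Ha. repeat split; auto; rewrite dot_sym; auto.
  - apply (Rmult_eq_reg_l (dot a a)); lra.
  - apply (Rmult_eq_reg_l (dot a a)); lra.
Qed.

Lemma common_perp c0 c1 c2 : dot c0 (cross c1 c2) = 0 ->
  exists v, nz v /\ dot v c0 = 0 /\ dot v c1 = 0 /\ dot v c2 = 0.
Proof.
  intros D.
  destruct (classic (nz (cross c1 c2))) as [H | H12].
  { exists (cross c1 c2); rewrite dot_sym; repeat split; auto; vsimpl; ring. }
  destruct (classic (nz (cross c2 c0))) as [H | H20].
  { exists (cross c2 c0); repeat split; auto; [vsimpl; ring | | vsimpl; ring].
    rewrite <- D; vsimpl; ring. }
  destruct (classic (nz (cross c0 c1))) as [H | H01].
  { exists (cross c0 c1); repeat split; auto; [vsimpl; ring | vsimpl; ring |].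
    rewrite <- D; vsimpl; ring. }
  destruct (classic (nz c0)) as [h0 | h0].
  { apply perp_of_parallel; auto. intro X; apply H20, nz_cross_sym, X. }
  destruct (classic (nz c1)) as [h1 | h1].
  { destruct (perp_of_parallel c1 c2 c0 h1 H12 (fun X => H01 (nz_cross_sym _ _ X)))
      as [v (? & ? & ? & ?)]; exists v; tauto. }
  destruct (classic (nz c2)) as [h2 | h2].
  { destruct (perp_of_parallel c2 c0 c1 h2 H20 (fun X => H12 (nz_cross_sym _ _ X)))
      as [v (? & ? & ? & ?)]; exists v; tauto. }
  exists e1. split; [apply std_basis |].
  rewrite (dot_sym _ c0), (dot_sym _ c1), (dot_sym _ c2), !not_nz_dot; auto.
Qed.

Lemma singular_left_kernel (M : mat) : det3 M = 0 ->
  exists v, nz v /\ forall k, dot v (col M k) = 0.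
Proof.
  intros D. destruct (common_perp _ _ _ D) as [v (Hv & h0 & h1 & h2)].
  exists v; split; auto; intros []; auto.
Qed.

Definition mterm (M : mat) (b : vec3) : mat := fun j k => b j / dot b b * dot b (col M k).

Lemma mat_expand3 (M : mat) a b c : orth_triple a b c ->
  forall j k, M j k = mterm M a j k + mterm M b j k + mterm M c j k.
Proof.
  intros T j k. change (M j k) with (col M k j). rewrite (orth_expand a b c (col M k) T j). unfold mterm, coef, col, Rdiv; ring.
Qed.

Lemma mat_expand2 (M : mat) a b c : orth_triple a b c -> (forall k, dot c (col M k) = 0) ->
  forall j k, M j k = mterm M a j k + mterm M b j k.
Proof.
  intros T Hc j k. change (M j k) with (col M k j). rewrite (orth_expand2 a b c (col M k) T (Hc k) j).
  unfold mterm, coef, col, Rdiv; ring.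
Qed.
Lemma tensor_ext (A B : tensor) : (forall i j k, A i j k = B i j k) -> A = B.
Proof.
  intros H; apply functional_extensionality; intro i;
  apply functional_extensionality; intro j; apply functional_extensionality; intro k; auto.
Qed.

Definition slice (A : tensor) (u : vec3) : mat := fun j k => dot u (fun i => A i j k).

(* The outer product [u (x) b (x) (b^T slice A u)], normalised so that summing it
   over orthogonal bases of directions [u] and [b] reconstructs [A]. *)
Definition term (A : tensor) (u b : vec3) : tensor :=
  outer (vsc (/ dot u u) u) (vsc (/ dot b b) b) (fun k => dot b (col (slice A u) k)).

Lemma term_entry A u b i j k : term A u b i j k = u i / dot u u * mterm (slice A u) b j k.
Proof. unfold term, outer, mterm, vsc, Rdiv; ring. Qed.

Lemma tensor_expand A u1 u2 u3 : orth_triple u1 u2 u3 -> forall i j k,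
  A i j k = u1 i / dot u1 u1 * slice A u1 j k + u2 i / dot u2 u2 * slice A u2 j k
            + u3 i / dot u3 u3 * slice A u3 j k.
Proof.
  intros T i j k. rewrite (orth_expand u1 u2 u3 (fun i => A i j k) T i).
  unfold coef, slice, Rdiv; ring.
Qed.

Lemma singular_slice_orth A c : nz c -> exists u, nz u /\ dot u c = 0 /\ det3 (slice A u) = 0.
Proof.
  intros Hc. destruct (complete_orth c Hc) as [p [q (Hp & Hq & _ & pq & pc & qc)]].
  destruct (singular_pencil (slice A p) (slice A q)) as [s [t [Hst D]]].
  exists (vlin s p t q). unfold nz in *. split; [| split].
  - replace (dot (vlin s p t q) (vlin s p t q))
      with (s * s * dot p p + t * t * dot q q + 2 * s * t * dot p q) by (vsimpl; ring).
    rewrite pq. destruct Hst as [h | h]; pose proof (Rsqr_pos_lt _ h); unfold Rsqr in *; nra.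
  - replace (dot (vlin s p t q) c) with (s * dot p c + t * dot q c) by (vsimpl; ring).
    rewrite pc, qc; ring.
  - rewrite <- D. f_equal. apply functional_extensionality; intro j;
    apply functional_extensionality; intro k. unfold slice; vsimpl; ring.
Qed.

Lemma frob_outer x y z x' y' z' :
  frob_inner (outer x y z) (outer x' y' z') = dot x x' * dot y y' * dot z z'.
Proof. unfold frob_inner, outer; vsimpl; ring. Qed.

Lemma term_orth_u A u b u' b' : dot u u' = 0 -> frob_inner (term A u b) (term A u' b') = 0.
Proof.
  intros H; unfold term; rewrite frob_outer.
  replace (dot (vsc (/ dot u u) u) (vsc (/ dot u' u') u')) with (/ dot u u * / dot u' u' * dot u u')
    by (vsimpl; ring). rewrite H; ring.
Qed.

Lemma term_orth_b A u b b' : dot b b' = 0 -> frob_inner (term A u b) (term A u b') = 0.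
Proof.
  intros H; unfold term; rewrite frob_outer.
  replace (dot (vsc (/ dot b b) b) (vsc (/ dot b' b') b')) with (/ dot b b * / dot b' b' * dot b b')
    by (vsimpl; ring). rewrite H; ring.
Qed.

Definition is_outer (T : tensor) : Prop := exists x y z, T = outer x y z.
Definition tsum (l : list tensor) : tensor := fold_right tadd tzero l.

Fixpoint pairwise_orth (l : list tensor) : Prop :=
  match l with
  | [] => True
  | Y :: l' => Forall (fun Z => frob_inner Y Z = 0) l' /\ pairwise_orth l'
  end.

(* Choose orthogonal directions u1, u2 with singular slices and
   complete them by u3; each singular slice needs two orthogonal rank-one pieces,
   the last slice three. *)
Theorem orth_decomp7 (A : tensor) : exists Ys,
  length Ys = 7%nat /\ Forall is_outer Ys /\ pairwise_orth Ys /\ tsum Ys = A.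
Proof.
  destruct std_basis as (_ & _ & ne3 & _).
  destruct (singular_slice_orth A e3 ne3) as [u1 (n1 & _ & D1)].
  destruct (singular_slice_orth A u1 n1) as [u2 (n2 & o21 & D2)].
  rewrite dot_sym in o21.
  set (u3 := cross u1 u2).
  pose proof (orth_triple_cross u1 u2 n1 n2 o21) as U; fold u3 in U.
  pose proof U as (_ & _ & _ & o12 & o13 & o23).
  destruct (singular_left_kernel _ D1) as [v1 [nv1 K1]].
  destruct (singular_left_kernel _ D2) as [v2 [nv2 K2]].
  destruct (complete_orth v1 nv1) as [p1 [q1 T1]].
  destruct (complete_orth v2 nv2) as [p2 [q2 T2]].
  pose proof T1 as (_ & _ & _ & pq1 & _ & _).
  pose proof T2 as (_ & _ & _ & pq2 & _ & _).
  pose proof std_basis as (_ & _ & _ & b12 & b13 & b23).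
  exists [term A u1 p1; term A u1 q1; term A u2 p2; term A u2 q2;
          term A u3 e1; term A u3 e2; term A u3 e3].
  split; [reflexivity | split; [| split]].
  - repeat constructor; unfold is_outer, term; eauto.
  - cbn [pairwise_orth].
    repeat (apply Forall_cons || apply Forall_nil || split);
      first [apply term_orth_u; assumption | apply term_orth_b; assumption].
  - apply tensor_ext; intros i j k.
    rewrite (tensor_expand A u1 u2 u3 U i j k),
      (mat_expand2 _ p1 q1 v1 T1 K1 j k), (mat_expand2 _ p2 q2 v2 T2 K2 j k),
      (mat_expand3 (slice A u3) e1 e2 e3 std_basis j k).
    unfold tsum; cbn [fold_right]; unfold tadd, tzero. rewrite !term_entry. ring.
Qed.
Lemma frob_sym A B : frob_inner A B = frob_inner B A.
Proof. unfold frob_inner, sum3; ring. Qed.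

Lemma frob_addl A B C : frob_inner (tadd A B) C = frob_inner A C + frob_inner B C.
Proof. unfold frob_inner, tadd, sum3; ring. Qed.

Lemma frob_zerol C : frob_inner tzero C = 0.
Proof. unfold frob_inner, tzero, sum3; ring. Qed.

(* [frob_inner B B] is a sum of 27 squares: each of them is bounded by the sum. *)
Lemma entry_sq_le_frob B i j k : B i j k * B i j k <= frob_inner B B.
Proof.
  unfold frob_inner, sum3.
  destruct i, j, k;
  repeat match goal with |- context [B ?i ?j ?k * B ?i ?j ?k] =>
    let h := fresh in assert (h := Rle_0_sqr (B i j k)); unfold Rsqr in h;
    set (B i j k * B i j k) in * end;
  lra.
Qed.

Lemma frob_ge0 B : 0 <= frob_inner B B.
Proof. pose proof (entry_sq_le_frob B I0 I0 I0); pose proof (Rle_0_sqr (B I0 I0 I0)); unfold Rsqr in *; lra. Qed.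

Lemma frob_zero B : frob_inner B B = 0 -> B = tzero.
Proof.
  intro H. apply tensor_ext; intros i j k. unfold tzero.
  pose proof (entry_sq_le_frob B i j k); nra.
Qed.

Lemma vnorm_sq x : vnorm x * vnorm x = dot x x.
Proof. apply sqrt_sqrt, dot_ge0. Qed.

Lemma vnorm1_dot x : vnorm x = 1 -> dot x x = 1.
Proof. intro H; rewrite <- vnorm_sq, H; ring. Qed.

Lemma vnorm_ge0 x : 0 <= vnorm x.
Proof. apply sqrt_pos. Qed.

Lemma vnorm_e1 : vnorm e1 = 1.
Proof. unfold vnorm. replace (sum3 (fun i => e1 i * e1 i)) with 1 by (vsimpl; unfold e1, mk3; ring). apply sqrt_1. Qed.

Lemma vnorm_neg_e1 : vnorm (vsc (-1) e1) = 1.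
Proof.
  unfold vnorm. replace (sum3 (fun i => vsc (-1) e1 i * vsc (-1) e1 i)) with 1
    by (unfold e1; vsimpl; ring). apply sqrt_1.
Qed.

(* [<A, x(x)y(x)z>] is bounded on unit vectors, by Cauchy-Schwarz. *)
Lemma spec_values_bound A : bound (spec_values A).
Proof.
  exists ((frob_inner A A + 1) / 2). intros v [x [y [z (hx & hy & hz & ->)]]].
  apply vnorm1_dot in hx, hy, hz.
  set (Y := outer x y z).
  pose proof (frob_ge0 (fun i j k => A i j k - Y i j k)) as H.
  replace (frob_inner (fun i j k => A i j k - Y i j k) (fun i j k => A i j k - Y i j k))
    with (frob_inner A A - 2 * frob_inner A Y + frob_inner Y Y) in H by (unfold frob_inner, sum3; ring).
  unfold Y in *; rewrite frob_outer, hx, hy, hz in H. lra.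
Qed.

Lemma spec_lub A : is_lub (spec_values A) (spec_norm A).
Proof.
  unfold spec_norm. apply epsilon_spec.
  destruct (completeness _ (spec_values_bound A)) as [m Hm].
  - exists (frob_inner A (outer e1 e1 e1)), e1, e1, e1; repeat split; apply vnorm_e1.
  - exists m; auto.
Qed.

Lemma spec_ge A x y z : vnorm x = 1 -> vnorm y = 1 -> vnorm z = 1 ->
  frob_inner A (outer x y z) <= spec_norm A.
Proof. intros. apply (proj1 (spec_lub A)). exists x, y, z; auto. Qed.

Lemma spec_nonneg A : 0 <= spec_norm A.
Proof.
  pose proof (spec_ge A _ _ _ vnorm_e1 vnorm_e1 vnorm_e1).
  pose proof (spec_ge A _ _ _ vnorm_neg_e1 vnorm_e1 vnorm_e1).
  replace (frob_inner A (outer (vsc (-1) e1) e1 e1)) with (- frob_inner A (outer e1 e1 e1)) in *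
    by (unfold frob_inner, outer; vsimpl; ring).
  lra.
Qed.

Lemma normalize w : nz w -> 0 < vnorm w /\ vnorm (vsc (/ vnorm w) w) = 1.
Proof.
  intros Hw. unfold nz in Hw. assert (0 < vnorm w) by (apply sqrt_lt_R0; exact Hw).
  split; auto. unfold vnorm at 1.
  replace (sum3 (fun i => vsc (/ vnorm w) w i * vsc (/ vnorm w) w i))
    with (/ vnorm w * / vnorm w * dot w w) by (vsimpl; ring).
  rewrite <- vnorm_sq. replace (/ vnorm w * / vnorm w * (vnorm w * vnorm w)) with 1
    by (field; lra). apply sqrt_1.
Qed.

(* Homogeneity of the spectral norm on outer products:
   [<A, x(x)y(x)z> <= ||A||_2 |x| |y| |z|]. *)
Lemma spec_outer_bound A x y z :
  frob_inner A (outer x y z) <= spec_norm A * (vnorm x * vnorm y * vnorm z).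
Proof.
  pose proof (spec_nonneg A). pose proof (vnorm_ge0 x); pose proof (vnorm_ge0 y);
  pose proof (vnorm_ge0 z).
  destruct (classic (nz x /\ nz y /\ nz z)) as [(nx & ny & nz') | Z].
  - destruct (normalize x nx) as [px ux]; destruct (normalize y ny) as [py uy]; destruct (normalize z nz') as [pz uz].
    pose proof (spec_ge A _ _ _ ux uy uz) as S.
    replace (frob_inner A (outer x y z)) with ((vnorm x * vnorm y * vnorm z) *
      frob_inner A (outer (vsc (/ vnorm x) x) (vsc (/ vnorm y) y) (vsc (/ vnorm z) z)))
      by (unfold frob_inner, outer, vsc, sum3; field; lra).
    assert (0 < vnorm x * vnorm y * vnorm z) by (repeat apply Rmult_lt_0_compat; auto). nra.
  - replace (frob_inner A (outer x y z)) with 0; [repeat apply Rmult_le_pos; auto |].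
    apply not_and_or in Z; destruct Z as [Z | Z]; [| apply not_and_or in Z; destruct Z as [Z | Z]];
    pose proof (not_nz_zero _ Z) as E; unfold frob_inner, outer, sum3; rewrite !E; ring.
Qed.

Lemma outer_proj_bound A Y : is_outer Y -> frob_inner A Y = frob_inner Y Y ->
  frob_inner Y Y <= spec_norm A ^ 2.
Proof.
  intros [x [y [z ->]]] HA. pose proof (spec_outer_bound A x y z) as S.
  set (q := vnorm x * vnorm y * vnorm z) in S.
  assert (Q : frob_inner (outer x y z) (outer x y z) = q * q)
    by (rewrite frob_outer, <- !vnorm_sq; unfold q; ring).
  assert (0 <= q) by (unfold q; pose proof (vnorm_ge0 x); pose proof (vnorm_ge0 y);
                      pose proof (vnorm_ge0 z); repeat apply Rmult_le_pos; auto).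
  pose proof (spec_nonneg A). rewrite HA, Q in S. rewrite Q.
  assert (q <= spec_norm A) by nra. nra.
Qed.

Lemma tsum_orth Z l : Forall (fun W => frob_inner Z W = 0) l -> frob_inner (tsum l) Z = 0.
Proof.
  induction l as [| W l IH]; intros H; simpl.
  - apply frob_zerol.
  - inversion H; subst. rewrite frob_addl, IH, frob_sym; auto. lra.
Qed.

Lemma tsum_proj l : pairwise_orth l -> forall Y, In Y l -> frob_inner (tsum l) Y = frob_inner Y Y.
Proof.
  induction l as [| Z l IH]; intros Hp Y HY; simpl in *; [contradiction |].
  destruct Hp as [HZ Hp]. rewrite frob_addl. destruct HY as [<- | HY].
  - rewrite tsum_orth; auto; ring.
  - rewrite IH; auto. rewrite Forall_forall in HZ. rewrite HZ; auto; ring.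
Qed.

Lemma tsum_norm_bound l S : pairwise_orth l -> (forall Y, In Y l -> frob_inner Y Y <= S) ->
  frob_inner (tsum l) (tsum l) <= INR (length l) * S.
Proof.
  induction l as [| Z l IH]; intros Hp H; simpl in *.
  - rewrite frob_zerol; lra.
  - destruct Hp as [HZ Hp]. change (fold_right tadd tzero l) with (tsum l).
    replace (frob_inner (tadd Z (tsum l)) (tadd Z (tsum l))) with
      (frob_inner Z Z + 2 * frob_inner (tsum l) Z + frob_inner (tsum l) (tsum l))
      by (unfold frob_inner, tadd, sum3; ring).
    rewrite tsum_orth by auto.
    assert (frob_inner (tsum l) (tsum l) <= INR (length l) * S) by (apply IH; auto).
    pose proof (H Z (or_introl eq_refl)).
    destruct (length l); [simpl in *; lra | rewrite S_INR in *; lra].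
Qed.

Lemma pairwise_orth_nth l : pairwise_orth l <->
  (forall a b, (a < length l)%nat -> (b < length l)%nat -> a <> b ->
     frob_inner (nth a l tzero) (nth b l tzero) = 0).
Proof.
  induction l as [| Y l IH]; simpl; split.
  - intros _ a b Ha; lia.
  - auto.
  - intros [HY Hp] a b Ha Hb Hab. rewrite Forall_forall in HY.
    destruct a as [| a]; destruct b as [| b]; try lia.
    + apply HY, nth_In; lia.
    + rewrite frob_sym; apply HY, nth_In; lia.
    + apply IH; auto; lia.
  - intros H. split.
    + rewrite Forall_forall; intros Z HZ. destruct (In_nth l Z tzero HZ) as [b [Hb <-]].
      apply (H 0%nat (S b)); lia.
    + apply IH. intros a b Ha Hb Hab. apply (H (S a) (S b)); lia.
Qed.

Lemma orth_decomp_bound A r : orth_decomp A r -> frob_inner A A <= INR r * spec_norm A ^ 2.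
Proof.
  intros [Ys (Hl & Hr & Ho & HA)].
  assert (Hp : pairwise_orth Ys) by (apply pairwise_orth_nth; rewrite Hl; auto).
  change (fold_right tadd tzero Ys) with (tsum Ys) in HA.
  subst A r. apply tsum_norm_bound; auto.
  intros Y HY. rewrite Forall_forall in Hr. destruct (Hr Y HY) as [_ HY1].
  apply outer_proj_bound; auto. apply tsum_proj; auto.
Qed.

Lemma drop_zero_terms l : Forall is_outer l -> pairwise_orth l ->
  exists l', (length l' <= length l)%nat /\ Forall rank_one l' /\ pairwise_orth l' /\
    tsum l' = tsum l /\ incl l' l.
Proof.
  induction l as [| Y l IH]; intros Ho Hp.
  - exists []; simpl; repeat split; auto; apply incl_refl.
  - inversion Ho; subst. destruct Hp as [HY Hp].
    destruct (IH H2 Hp) as [l' (Hlen & Hr & Hp' & Hs & Hi)].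
    destruct (classic (Y = tzero)) as [HZ | HZ].
    + exists l'; repeat split; auto.
      * simpl; lia.
      * simpl; rewrite Hs, HZ. apply tensor_ext; intros; unfold tadd, tzero; ring.
      * apply incl_tl; auto.
    + exists (Y :: l'); repeat split; simpl; auto; try lia.
      * constructor; auto. split; auto.
      * rewrite Forall_forall in *. intros Z HZ'. apply HY, Hi, HZ'.
      * rewrite Hs; reflexivity.
      * apply incl_cons; [left; auto | apply incl_tl; auto].
Qed.

Lemma orth_decomp_le7 A : exists r, (r <= 7)%nat /\ orth_decomp A r.
Proof.
  destruct (orth_decomp7 A) as [Ys (Hl & Ho & Hp & Hs)].
  destruct (drop_zero_terms Ys Ho Hp) as [l' (Hlen & Hr & Hp' & Hs' & _)].
  exists (length l'); split; [lia |].
  exists l'; repeat split; auto.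
  - apply pairwise_orth_nth; auto.
  - rewrite <- Hs, <- Hs'; reflexivity.
Qed.

Lemma ratio_lower_bound A : A <> tzero -> 1 / sqrt 7 <= spec_norm A / frob_norm A.
Proof.
  intro Hn. destruct (orth_decomp_le7 A) as [r [Hr H]].
  pose proof (orth_decomp_bound _ _ H) as B.
  apply le_INR in Hr. simpl (INR 7) in Hr.
  pose proof (spec_nonneg A) as S0. pose proof (pos_INR r). pose proof (frob_ge0 A).
  set (S := spec_norm A) in *.
  assert (B7 : frob_inner A A <= 7 * S ^ 2) by (assert (0 <= S ^ 2) by nra; nra).
  assert (Fp : 0 < frob_inner A A).
  { destruct (Req_dec (frob_inner A A) 0) as [Z | Z]; [exfalso; apply Hn, frob_zero, Z | lra]. }
  unfold frob_norm. set (F := frob_inner A A) in *.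
  assert (sF : 0 < sqrt F) by (apply sqrt_lt_R0; auto).
  assert (s7 : 0 < sqrt 7) by (apply sqrt_lt_R0; lra).
  assert (sqrt F <= sqrt 7 * S).
  { rewrite <- (sqrt_pow2 S) by auto. rewrite <- sqrt_mult by (lra || nra).
    apply sqrt_le_1_alt; lra. }
  apply (Rmult_le_reg_r (sqrt F)); auto. apply (Rmult_le_reg_l (sqrt 7)); auto.
  replace (sqrt 7 * (1 / sqrt 7 * sqrt F)) with (sqrt F) by (field; lra).
  replace (sqrt 7 * (S / sqrt F * sqrt F)) with (sqrt 7 * S) by (field; lra). auto.
Qed.
Ltac all_symmetry_instances HS :=
  let inst i j k := (let h := fresh in pose proof (HS i j k) as h; destruct h as (? & ? & ?)) in
  let row i j := (inst i j I0; inst i j I1; inst i j I2) in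
  let slab i := (row i I0; row i I1; row i I2) in
  slab I0; slab I1; slab I2.

(* A symmetric tensor is determined by its cubic form (polarisation). *)
Lemma assoc_sym_tensor_unique p A B :
  assoc_sym_tensor p A -> assoc_sym_tensor p B -> A = B.
Proof.
  intros [SA PA] [SB PB].
  set (D := fun i j k => A i j k - B i j k).
  assert (SD : symmetric D) by (intros i j k; unfold D; destruct (SA i j k), (SB i j k); lra).
  assert (PD : forall x, frob_inner D (outer x x x) = 0).
  { intro x. replace (frob_inner D (outer x x x))
      with (frob_inner A (outer x x x) - frob_inner B (outer x x x))
      by (unfold D, frob_inner, sum3; ring).
    rewrite <- PA, <- PB; ring. }
  all_symmetry_instances SD.
  pose proof (PD (mk3 1 0 0)); pose proof (PD (mk3 0 1 0)); pose proof (PD (mk3 0 0 1)).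
  pose proof (PD (mk3 1 1 0)); pose proof (PD (mk3 1 (-1) 0)).
  pose proof (PD (mk3 1 0 1)); pose proof (PD (mk3 1 0 (-1))).
  pose proof (PD (mk3 0 1 1)); pose proof (PD (mk3 0 1 (-1))); pose proof (PD (mk3 1 1 1)).
  unfold frob_inner, outer, sum3, mk3 in *.
  apply tensor_ext; intros i j k.
  assert (D i j k = 0) by (destruct i, j, k; lra).
  unfold D in *; lra.
Qed.

Definition Ch : tensor := fun i j k =>
  match i, j, k with
  | I0, I0, I0 => 1
  | I0, I1, I1 | I1, I0, I1 | I1, I1, I0 => -1
  | I0, I2, I2 | I2, I0, I2 | I2, I2, I0 => -1
  | _, _, _ => 0
  end.

Lemma Ch_sym : symmetric Ch.
Proof. intros i j k; destruct i, j, k; repeat split. Qed.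

Lemma Ch_assoc : assoc_sym_tensor cheb33 Ch.
Proof. split; [apply Ch_sym |]. intro x. unfold cheb33, frob_inner, outer, sum3, Ch; ring. Qed.

Lemma Ch_nonzero : Ch <> tzero.
Proof. intro H. assert (E : Ch I0 I0 I0 = tzero I0 I0 I0) by (rewrite H; auto).
  unfold Ch, tzero in E; lra. Qed.

Lemma Ch_frob : frob_inner Ch Ch = 7.
Proof. unfold frob_inner, sum3, Ch; ring. Qed.

(* [||Ch||_2 = 1]: [<Ch, x(x)y(x)z> = x.v] with [|v|^2 <= |y|^2 |z|^2],
   and the value 1 is attained at [e1(x)e1(x)e1]. *)
Lemma Ch_spec : spec_norm Ch = 1.
Proof.
  apply (is_lub_u (spec_values Ch)); [apply spec_lub | split].
  - intros w [x [y [z (hx & hy & hz & ->)]]].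
    apply vnorm1_dot in hx, hy, hz.
    set (v := mk3 (y I0 * z I0 - y I1 * z I1 - y I2 * z I2)
                  (- (y I0 * z I1 + y I1 * z I0)) (- (y I0 * z I2 + y I2 * z I0))).
    replace (frob_inner Ch (outer x y z)) with (dot x v)
      by (unfold v, frob_inner, outer, Ch; vsimpl; ring).
    assert (E : dot v v + (y I1 * z I2 - y I2 * z I1) ^ 2 = dot y y * dot z z)
      by (unfold v; vsimpl; ring).
    pose proof (dot_ge0 (fun i => x i - v i)) as H.
    replace (dot (fun i => x i - v i) (fun i => x i - v i)) with (dot x x - 2 * dot x v + dot v v)
      in H by (vsimpl; ring).
    pose proof (pow2_ge_0 (y I1 * z I2 - y I2 * z I1)). rewrite hy, hz in E; lra.
  - intros b Hb. apply Hb. exists e1, e1, e1; repeat split; try apply vnorm_e1.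
    unfold frob_inner, outer, sum3, Ch, e1, mk3; ring.
Qed.

Lemma Ch_ratio : spec_norm Ch / frob_norm Ch = 1 / sqrt 7.
Proof. unfold frob_norm; rewrite Ch_spec, Ch_frob; reflexivity. Qed.

Lemma rk_perp_spec A :
  orth_decomp A (rk_perp A) /\ forall r, orth_decomp A r -> (rk_perp A <= r)%nat.
Proof.
  unfold rk_perp. apply epsilon_spec.
  destruct (dec_inh_nat_subset_has_unique_least_element (orth_decomp A))
    as [r [Hr _]]; eauto.
  - intro n; apply classic.
  - destruct (orth_decomp_le7 A) as [r [_ H]]; eauto.
Qed.

Lemma rk_perp_le7 A : (rk_perp A <= 7)%nat.
Proof. destruct (orth_decomp_le7 A) as [r [Hr H]]. pose proof (proj2 (rk_perp_spec A) r H). lia. Qed.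

(* The Chebyshev tensor has maximal orthogonal rank: [7 <= |Ch|_F^2 / ||Ch||_2^2 <= rk]. *)
Lemma rk_perp_Ch : rk_perp Ch = 7%nat.
Proof.
  pose proof (rk_perp_le7 Ch).
  pose proof (orth_decomp_bound _ _ (proj1 (rk_perp_spec Ch))) as B.
  rewrite Ch_frob, Ch_spec in B.
  destruct (le_lt_dec 7 (rk_perp Ch)) as [l | l]; [lia |].
  exfalso. assert (h : (rk_perp Ch <= 6)%nat) by lia. apply le_INR in h. simpl (INR 6) in h. lra.
Qed.

Lemma max_rk_perp_7 : max_rk_perp = 7%nat.
Proof.
  assert (Hs : (exists A, rk_perp A = max_rk_perp) /\ forall A, (rk_perp A <= max_rk_perp)%nat).
  { unfold max_rk_perp. apply epsilon_spec. exists 7%nat.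
    split; [exists Ch; apply rk_perp_Ch | apply rk_perp_le7]. }
  destruct Hs as [[A HA] HB]. pose proof (HB Ch) as HC. rewrite rk_perp_Ch in HC.
  pose proof (rk_perp_le7 A). lia.
Qed.

Lemma brao_attained V A0 m :
  (forall A, V A -> A <> tzero -> m <= spec_norm A / frob_norm A) ->
  V A0 -> A0 <> tzero -> spec_norm A0 / frob_norm A0 = m -> brao V = m.
Proof.
  intros Hlb HV Hn Hm.
  assert (G : is_glb (ratio_values V) m).
  { split.
    - intros y [A (HA & HAn & ->)]; auto.
    - intros b Hb. rewrite <- Hm. apply Hb. exists A0; auto. }
  assert (G' : is_glb (ratio_values V) (brao V)) by (unfold brao; apply epsilon_spec; eauto).
  destruct G as [G1 G2], G' as [G1' G2'].
  apply Rle_antisym; [apply G2; auto | apply G2'; auto].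
Qed.

Lemma brao_1_sqrt7 V : V Ch -> brao V = 1 / sqrt 7.
Proof.
  intros HV. apply (brao_attained V Ch); auto using Ch_nonzero, Ch_ratio.
  intros A _ HA; apply ratio_lower_bound, HA.
Qed.

Theorem corollary1p5 :
  brao full_space = brao sym_space /\
  brao sym_space = 1 / sqrt (INR max_rk_perp) /\
  1 / sqrt (INR max_rk_perp) = 1 / sqrt 7 /\
  (exists A : tensor, assoc_sym_tensor cheb33 A) /\
  (forall A : tensor, assoc_sym_tensor cheb33 A ->
     extremal full_space A /\ extremal sym_space A).
Proof.
  assert (Hf : brao full_space = 1 / sqrt 7) by (apply brao_1_sqrt7; exact I).
  assert (Hs : brao sym_space = 1 / sqrt 7) by (apply brao_1_sqrt7, Ch_sym).
  assert (Hm : INR max_rk_perp = 7) by (rewrite max_rk_perp_7; simpl; ring).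
  rewrite Hf, Hs, Hm. split; [| split; [| split; [| split]]]; auto.
  - exists Ch; apply Ch_assoc.
  - intros A HA. rewrite (assoc_sym_tensor_unique _ _ _ HA Ch_assoc).
    unfold extremal; rewrite Ch_ratio, Hf, Hs.
    repeat split; first [exact I | apply Ch_nonzero | apply Ch_sym].
Qed.
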